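(* Let $n\geq 2$ be an integer and $b:=-n+i$. If $s$ is a neighbour of $T_n$, then $bs+\delta$ is a neighbour of $T_n$ for some $\delta\in\{0,\pm1,\ldots,\pm n^2\}$.
   Context: $T_n$ is the attractor of the iterated function system $\{z\mapsto b^{-1}(z+d): d\in\{0,1,\ldots,n^2\}\}$, i.e. $T_n=\{\sum_{j\ge1}d_jb^{-j}: d_j\in\{0,\ldots,n^2\}\}$. For $Y\subset\mathbb{C}$, a neighbour of $Y$ is a Gaussian integer $s$ with $Y\cap(Y+s)\neq\emptyset$. *)

From Stdlib Require Import Reals ZArith.
From Coquelicot Require Import Coquelicot.

Open Scope C_scope.

Definition base (n : nat) : C := (- INR n, 1)%R.

Definition gauss (x y : Z) : C := (IZR x, IZR y).

Definition InT (n : nat) (z : C) : Prop :=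
  exists d : nat -> nat,
    (forall j, (d j <= n ^ 2)%nat) /\
    is_series (fun j => RtoC (INR (d j)) * Cinv (Cpow (base n) (S j))) z.

Definition IsNeighbour (n : nat) (s : C) : Prop :=
  (exists x y : Z, s = gauss x y) /\
  exists z : C, InT n z /\ InT n (z - s).

(** Multiplying by [b] and removing the first digit maps [T_n] into itself:
    if [z = sum_j d_j b^(-j)] then [b z - d_1 = sum_j d_(j+1) b^(-j)].
    Given [z] in [T_n] and [z - s] in [T_n] with first digits [d] and [e],
    the points [b z - d] and [b (z - s) - e] both lie in [T_n] and differ by
    [b s + (e - d)], a Gaussian integer with [|e - d| <= n^2]. *)

From Stdlib Require Import Reals ZArith Lra Lia.
From Coquelicot Require Import Coquelicot.
Open Scope C_scope.

Lemma base_neq0 (n : nat) : base n <> 0.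
Proof. intro H; injection H as _ H; lra. Qed.

Lemma is_series_shift_digits (b z : C) (c : nat -> C) :
  b <> 0 ->
  is_series (fun j => c j * Cinv (Cpow b (S j))) z ->
  is_series (fun j => c (S j) * Cinv (Cpow b (S j))) (b * z - c O).
Proof.
  intros Hb Hz.
  set (a := fun j => c j * Cinv (Cpow b (S j))) in Hz.
  assert (Htail : is_series (fun j => a (S j)) (z - a O)).
  { apply is_series_incr_1.
    match goal with |- is_series _ ?l => replace l with z end; [exact Hz |].
    change (z = z - a O + a O); ring. }
  apply (is_series_scal b) in Htail.
  eapply is_series_ext; [| replace (b * z - c O) with (scal b (z - a O)); [exact Htail |]].
  - intro j; change (b * a (S j) = c (S j) * Cinv (Cpow b (S j))).
    unfold a; simpl.
    assert (Hpow := Cpow_nz b j Hb).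
    field; auto.
  - change (b * (z - a O) = b * z - c O); unfold a; simpl.
    field; auto.
Qed.

Lemma InT_shift (n : nat) (z : C) :
  InT n z ->
  exists d0 : nat, (d0 <= n ^ 2)%nat /\ InT n (base n * z - RtoC (INR d0)).
Proof.
  intros [d [Hd Hz]].
  exists (d O); split; [apply Hd |].
  exists (fun j => d (S j)); split; [intro j; apply Hd |].
  exact (is_series_shift_digits (base n) z (fun j => RtoC (INR (d j))) (base_neq0 n) Hz).
Qed.

Lemma base_mul_gauss_add (n : nat) (x y delta : Z) :
  base n * gauss x y + RtoC (IZR delta) =
  gauss (- Z.of_nat n * x - y + delta) (x - Z.of_nat n * y).
Proof.
  unfold gauss, base, RtoC, Cmult, Cplus; simpl.
  rewrite !plus_IZR, !minus_IZR, !mult_IZR, opp_IZR, <- !INR_IZR_INZ.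
  f_equal; ring.
Qed.

Lemma sub_digit_diff (b z s : C) (d e : nat) :
  b * z - RtoC (INR d) - (b * s + RtoC (IZR (Z.of_nat e - Z.of_nat d))) =
  b * (z - s) - RtoC (INR e).
Proof.
  rewrite minus_IZR, <- !INR_IZR_INZ.
  unfold RtoC, Cminus, Cplus, Copp, Cmult; simpl.
  f_equal; ring.
Qed.

Lemma Zabs_sub_le_of_nat (m d e : nat) :
  (d <= m)%nat -> (e <= m)%nat -> (Z.abs (Z.of_nat e - Z.of_nat d) <= Z.of_nat m)%Z.
Proof. lia. Qed.

Theorem lemma3p6 (n : nat) (s : C) :
  (2 <= n)%nat ->
  IsNeighbour n s ->
  exists delta : Z,
    (Z.abs delta <= Z.of_nat n ^ 2)%Z /\
    IsNeighbour n (base n * s + RtoC (IZR delta)).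
Proof.
  (* The argument works for every [n]. *)
  intros _ [[x [y ->]] [z [Hz Hzs]]].
  destruct (InT_shift n z Hz) as [d [Hd Hbz]].
  destruct (InT_shift n (z - gauss x y) Hzs) as [e [He Hbzs]].
  exists (Z.of_nat e - Z.of_nat d)%Z; split.
  { replace (Z.of_nat n ^ 2)%Z with (Z.of_nat (n ^ 2)) by now rewrite Nat2Z.inj_pow.
    exact (Zabs_sub_le_of_nat _ _ _ Hd He). }
  split.
  - rewrite base_mul_gauss_add; eauto.
  - exists (base n * z - RtoC (INR d)); split; [exact Hbz |].
    rewrite sub_digit_diff; exact Hbzs.
Qed.
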